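(* Let $\mathbf{\Theta}$ be a countable set of intentions and consider the following language-generation model: an intention $\theta\sim q(\theta)$ is drawn, a message $\mathbf{x}\sim q(\mathbf{x}\mid\theta)$ is generated, and a continuation $\mathbf{y}$ is generated with $q(\mathbf{y}\mid\mathbf{x},\theta)$, so that $q(\mathbf{x},\mathbf{y})=\sum_{\theta\in\mathbf{\Theta}}q(\mathbf{x},\theta)\,q(\mathbf{y}\mid\mathbf{x},\theta)$ and $q(\mathbf{x})=\sum_{\theta}q(\mathbf{x},\theta)$. Suppose the language is $\varepsilon$-ambiguous, and let $\mathbf{x}$ be a prompt generated under intention $\theta_{\mathbf{x}}$ with ambiguity $\varepsilon(\mathbf{x})$, i.e. $\Pr(\theta_{\mathbf{x}}\mid\mathbf{x})\ge 1-\varepsilon(\mathbf{x})$. Let $p_{\mathbf{\Lambda}_*}$ be a language model whose distribution over strings equals the true marginal distribution, $p_{\mathbf{\Lambda}_*}(\mathbf{s})=q(\mathbf{s})$ for all strings $\mathbf{s}$, and let $p_{\mathbf{\Lambda}_*}(\mathbf{y}\mid\mathbf{x})=p_{\mathbf{\Lambda}_*}(\mathbf{x},\mathbf{y})/p_{\mathbf{\Lambda}_*}(\mathbf{x})$. Then for every $\mathbf{y}$, $$\big|p_{\mathbf{\Lambda}_*}(\mathbf{y}\mid\mathbf{x})-q(\mathbf{y}\mid\mathbf{x},\theta_{\mathbf{x}})\big|\le\varepsilon(\mathbf{x}).$$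
   Context: A language is $\varepsilon$-ambiguous if every message $\mathbf{x}$ it generates under intention $\theta_0$ satisfies $\Pr(\theta_0\mid\mathbf{x})\ge 1-\varepsilon(\mathbf{x})$ for some $\varepsilon(\mathbf{x})\in[0,1)$, the ambiguity of $\mathbf{x}$. Here $\Pr(\theta\mid\mathbf{x})=q(\theta,\mathbf{x})/q(\mathbf{x})$ with $q(\theta,\mathbf{x})=q(\theta)q(\mathbf{x}\mid\theta)$. *)

From HB Require Import structures.
From mathcomp Require Import all_boot all_order all_algebra.
From mathcomp Require Import all_classical all_reals all_analysis.
Set Implicit Arguments. Unset Strict Implicit. Unset Printing Implicit Defensive.
Import Order.TTheory GRing.Theory Num.Theory.
Local Open Scope classical_set_scope.
Local Open Scope ring_scope.

Section LangModel.
Variables (R : realType) (Theta X Y : countType).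
(* qT t = q(theta); qX t x = q(x | theta); qY x t y = q(y | x, theta) *)
Variables (qT : Theta -> R) (qX : Theta -> X -> R) (qY : X -> Theta -> Y -> R).

Definition q_xt (x : X) (t : Theta) : R := qT t * qX t x.

Definition q_marg (x : X) : R :=
  fine (\esum_(t in [set: Theta]) (q_xt x t)%:E).

Definition q_joint (x : X) (y : Y) : R :=
  fine (\esum_(t in [set: Theta]) (q_xt x t * qY x t y)%:E).

Definition posterior (t : Theta) (x : X) : R := q_xt x t / q_marg x.

Definition gen_model : Prop :=
  (forall t, 0 <= qT t) /\
  \esum_(t in [set: Theta]) (qT t)%:E = 1%E /\
  (forall t x, 0 <= qX t x) /\
  (forall t, \esum_(x in [set: X]) (qX t x)%:E = 1%E) /\
  (forall x t y, 0 <= qY x t y) /\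
  (forall x t, \esum_(y in [set: Y]) (qY x t y)%:E = 1%E).
End LangModel.

Definition lm_cond (R : realType) (X Y : Type)
  (pX : X -> R) (pXY : X -> Y -> R) (x : X) (y : Y) : R := pXY x y / pX x.

(** Split every sum over intentions into the term of the true intention
    [theta_x] and the residual mass [m] of all other intentions.  Writing
    [a = q(x, theta_x)], [b = q(y | x, theta_x)] and [j] for the residual of
    the joint sum, one has [0 <= j <= m] because [q(y | x, theta) <= 1], and
    [q(y | x) - b = (j - b m) / (a + m)].  Both [j] and [b m] lie in [[0, m]],
    so the deviation is at most [m / (a + m) = 1 - Pr(theta_x | x) <= eps]. *)

From HB Require Import structures.
From mathcomp Require Import all_boot all_order all_algebra.
From mathcomp Require Import all_classical all_reals all_analysis.
From mathcomp Require Import ring lra.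
Set Implicit Arguments. Unset Strict Implicit. Unset Printing Implicit Defensive.
Import Order.TTheory GRing.Theory Num.Theory.
Local Open Scope classical_set_scope.
Local Open Scope ring_scope.

Lemma mixture_cond_dist (R : realFieldType) (a b m j eps : R) :
  0 < a -> 0 <= j <= m -> 0 <= b <= 1 -> 1 - eps <= a / (a + m) ->
  `|(a * b + j) / (a + m) - b| <= eps.
Proof.
move=> a_gt0 /andP[j_ge0 jm] /andP[b_ge0 b_le1] post.
have am_gt0 : 0 < a + m by lra.
have -> : (a * b + j) / (a + m) - b = (j - b * m) / (a + m).
  by field; rewrite gt_eqF.
rewrite normrM normfV (gtr0_norm am_gt0) ler_pdivrMr //.
have m_le : m <= eps * (a + m).
  by move: post; rewrite ler_pdivlMr // mulrBl mul1r; lra.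
have bm_ge0 : 0 <= b * m by rewrite mulr_ge0 //; lra.
have bm_le : b * m <= m by rewrite ler_piMl //; lra.
by rewrite ler_norml; apply/andP; split; lra.
Qed.

Section NonnegativeEsum.
Variables (R : realType) (T : choiceType).
Implicit Types (f g : T -> R) (S : set T).

Lemma esum_setTD1 f t0 : (forall t, 0 <= f t) ->
  (\esum_(t in [set: T]) (f t)%:E =
   (f t0)%:E + \esum_(t in ~` [set t0]) (f t)%:E)%E.
Proof.
move=> f_ge0; rewrite (esumID [set t0]) /=; last by move=> t _; rewrite lee_fin.
by rewrite !setTI esum_set1 // lee_fin.
Qed.

Lemma esum_prob_le1 f t0 : (forall t, 0 <= f t) ->
  (\esum_(t in [set: T]) (f t)%:E = 1)%E -> f t0 <= 1.
Proof.
move=> f_ge0 f1; have := esum_setTD1 t0 f_ge0; rewrite f1 => f1_split.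
by rewrite -lee_fin f1_split leeDl // esum_ge0 // => t _; rewrite lee_fin.
Qed.

Lemma fin_num_esum_le S f g : (forall t, 0 <= f t <= g t) ->
  \esum_(t in S) (g t)%:E \is a fin_num -> \esum_(t in S) (f t)%:E \is a fin_num.
Proof.
move=> fg; have f_ge0 t : 0 <= f t by case/andP: (fg t).
have le_fg : (\esum_(t in S) (f t)%:E <= \esum_(t in S) (g t)%:E)%E.
  by apply: le_esum => t _; rewrite lee_fin; case/andP: (fg t).
have g_ge0 : (0 <= \esum_(t in S) (g t)%:E)%E.
  by apply: esum_ge0 => t _; rewrite lee_fin (le_trans (f_ge0 t)) //; case/andP: (fg t).
rewrite !ge0_fin_numE //; first exact: le_lt_trans.
by apply: esum_ge0 => t _; rewrite lee_fin.
Qed.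

Lemma fine_le_esum S f g : (forall t, 0 <= f t <= g t) ->
  \esum_(t in S) (g t)%:E \is a fin_num ->
  fine (\esum_(t in S) (f t)%:E) <= fine (\esum_(t in S) (g t)%:E).
Proof.
move=> fg g_fin; apply: fine_le => //; first exact: fin_num_esum_le g_fin.
by apply: le_esum => t _; rewrite lee_fin; case/andP: (fg t).
Qed.

Lemma fine_esum_setTD1 f t0 : (forall t, 0 <= f t) ->
  \esum_(t in [set: T]) (f t)%:E \is a fin_num ->
  fine (\esum_(t in [set: T]) (f t)%:E) =
  f t0 + fine (\esum_(t in ~` [set t0]) (f t)%:E).
Proof.
move=> f_ge0; rewrite (esum_setTD1 t0 f_ge0) fin_numD => /andP[_ rest_fin].
by rewrite fineD.
Qed.

End NonnegativeEsum.

Section GenerativeModel.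
Variables (R : realType) (Theta X Y : countType).
Variables (qT : Theta -> R) (qX : Theta -> X -> R) (qY : X -> Theta -> Y -> R).
Hypothesis model : gen_model qT qX qY.

Lemma q_xt_bounds x t : 0 <= q_xt qT qX x t <= qT t.
Proof.
case: model => qT_ge0 [_ [qX_ge0 [qX1 _]]].
rewrite /q_xt mulr_ge0 // ler_piMr //.
exact: esum_prob_le1 (qX_ge0 t) (qX1 t).
Qed.

Lemma qY_bounds x t y : 0 <= qY x t y <= 1.
Proof.
case: model => _ [_ [_ [_ [qY_ge0 qY1]]]].
by rewrite qY_ge0; exact: esum_prob_le1 (qY_ge0 x t) (qY1 x t).
Qed.

Lemma q_xtY_bounds x t y : 0 <= q_xt qT qX x t * qY x t y <= q_xt qT qX x t.
Proof.
have /andP[xt_ge0 _] := q_xt_bounds x t.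
have /andP[qY_ge0 qY_le1] := qY_bounds x t y.
by rewrite mulr_ge0 // ler_piMr.
Qed.

Lemma esum_q_xt_fin_num x : \esum_(t in [set: Theta]) (q_xt qT qX x t)%:E \is a fin_num.
Proof.
case: model => _ [qT1 _].
by apply: (fin_num_esum_le (g := qT)) => [t|]; rewrite ?q_xt_bounds ?qT1.
Qed.

Lemma q_marg_setTD1 x t0 :
  q_marg qT qX x = q_xt qT qX x t0 + fine (\esum_(t in ~` [set t0]) (q_xt qT qX x t)%:E).
Proof.
apply: fine_esum_setTD1; last exact: esum_q_xt_fin_num.
by move=> t; case/andP: (q_xt_bounds x t).
Qed.

Lemma q_joint_setTD1 x y t0 :
  q_joint qT qX qY x y = q_xt qT qX x t0 * qY x t0 y +
    fine (\esum_(t in ~` [set t0]) (q_xt qT qX x t * qY x t y)%:E).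
Proof.
apply: fine_esum_setTD1; first by move=> t; case/andP: (q_xtY_bounds x t y).
apply: (fin_num_esum_le (g := q_xt qT qX x)) => [t|].
- exact: q_xtY_bounds.
- exact: esum_q_xt_fin_num.
Qed.

Lemma q_joint_residual_bounds x y t0 :
  0 <= fine (\esum_(t in ~` [set t0]) (q_xt qT qX x t * qY x t y)%:E)
    <= fine (\esum_(t in ~` [set t0]) (q_xt qT qX x t)%:E).
Proof.
have xt_fin : \esum_(t in ~` [set t0]) (q_xt qT qX x t)%:E \is a fin_num.
  have := esum_q_xt_fin_num x; rewrite (esum_setTD1 t0) ?fin_numD => [/andP[]//|t].
  by case/andP: (q_xt_bounds x t).
apply/andP; split; last by apply: fine_le_esum => // t; exact: q_xtY_bounds.
by apply/fine_ge0/esum_ge0 => t _; rewrite lee_fin; case/andP: (q_xtY_bounds x t y).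
Qed.

End GenerativeModel.

Theorem proposition2 (R : realType) (Theta X Y : countType)
  (qT : Theta -> R) (qX : Theta -> X -> R) (qY : X -> Theta -> Y -> R)
  (pX : X -> R) (pXY : X -> Y -> R)
  (x : X) (theta_x : Theta) (eps : R) :
  gen_model qT qX qY ->
  0 < q_xt qT qX x theta_x ->
  0 <= eps -> eps < 1 ->
  posterior qT qX theta_x x >= 1 - eps ->
  (forall s, pX s = q_marg qT qX s) ->
  (forall s y, pXY s y = q_joint qT qX qY s y) ->
  forall y : Y, `| lm_cond pX pXY x y - qY x theta_x y | <= eps.
Proof.
move=> model a_gt0 _ _ post pX_q pXY_q y.
rewrite /lm_cond pX_q pXY_q (q_joint_setTD1 model _ _ theta_x).
rewrite (q_marg_setTD1 model _ theta_x).
apply: mixture_cond_dist => //.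
- exact: q_joint_residual_bounds model _ _ _.
- exact: (qY_bounds model x theta_x y).
- by move: post; rewrite /posterior (q_marg_setTD1 model _ theta_x).
Qed.
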